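(* For every $m\ge1$, the cardinality sensitivity of affine maximizers for $2$ players and $m$ items is $\mu_c(2,m)=1$.
   Context: Players $[n]$, items $[m]$, allocations $\Omega=\{A\in\{0,1\}^{n\times m}:\sum_iA_{i,j}=1\ \forall j\}$; $A_i\in\{0,1\}^m$ denotes the bundle (row) of player $i$. An affine maximizer is $f:\mathbb R^{n\times m}\to\Omega$ with $f(\theta)\in\arg\max_{A\in\Omega}\{c_A+\sum_iw_i\theta_i\cdot A_i\}$ for nonzero weights $w_i$ and reals $c_A$. Difference sets $Q_A=\mathrm{cl}\{\theta:f(\theta)=A\}$; indifference complex $\mathcal I(f)=\{\mathcal O\subseteq\Omega:\bigcap_{A\in\mathcal O}Q_A\ne\emptyset\}$. Let $\Psi_{(n,m)}$ be the set of indifference complexes of affine maximizers. With $\mathrm{Cd}(a,b)=\big||a|_1-|b|_1\big|$, define $\mu_c(n,m)=\min_{\mathcal I\in\Psi_{(n,m)}}\max\{\mathrm{Cd}(A_i,B_i): A,B\in F\text{ for some }F\in\mathcal I,\ i\in[n]\}$. *)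

From HB Require Import structures.
From mathcomp Require Import all_boot all_order all_algebra.
From mathcomp Require Import all_classical all_reals all_analysis.
Set Implicit Arguments. Unset Strict Implicit. Unset Printing Implicit Defensive.
Import Order.TTheory GRing.Theory Num.Theory.
Import numFieldNormedType.Exports.
Local Open Scope classical_set_scope.
Local Open Scope ring_scope.

(* Allocations Omega = { A in {0,1}^{n x m} : sum_i A_{i,j} = 1 for all j },
   encoded as boolean n x m matrices with exactly one true entry per column. *)
Definition Omega (n m : nat) : finType :=
  {A : 'M[bool]_(n, m) | [forall j : 'I_m, #|[set i : 'I_n | A i j]| == 1%N]}.

Definition allocmx {n m} (A : Omega n m) : 'M[bool]_(n, m) := val A.

Definition bundle_size {n m} (A : Omega n m) (i : 'I_n) : nat :=
  #|[set j : 'I_m | allocmx A i j]|.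

Definition bundle_value {R : realType} {n m} (theta : 'M[R]_(n, m))
    (A : Omega n m) (i : 'I_n) : R :=
  \sum_(j < m) theta i j * (allocmx A i j)%:R.

Definition affine_maximizer {R : realType} {n m}
    (f : 'M[R]_(n, m) -> Omega n m) : Prop :=
  exists (w : 'I_n -> R) (c : Omega n m -> R),
    (forall i, w i != 0) /\
    forall theta (B : Omega n m),
      c B + \sum_(i < n) w i * bundle_value theta B i
      <= c (f theta) + \sum_(i < n) w i * bundle_value theta (f theta) i.

Definition diff_set {R : realType} {n m} (f : 'M[R]_(n, m) -> Omega n m)
    (A : Omega n m) : set 'M[R]_(n, m) :=
  closure [set theta | f theta = A].

Definition in_indiff {R : realType} {n m} (f : 'M[R]_(n, m) -> Omega n m)
    (O : {set Omega n m}) : Prop :=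
  exists theta, forall A, A \in O -> diff_set f A theta.

Definition Cd {n m} (A B : Omega n m) (i : 'I_n) : nat :=
  `|(bundle_size A i)%:Z - (bundle_size B i)%:Z|%N.

Definition cd_max {R : realType} {n m} (f : 'M[R]_(n, m) -> Omega n m) : nat :=
  (\max_(F : {set Omega n m} | `[< in_indiff f F >])
     \max_(A in F) \max_(B in F) \max_(i < n) Cd A B i)%N.

Definition is_mu_c (R : realType) (n m k : nat) : Prop :=
  (exists f : 'M[R]_(n, m) -> Omega n m, affine_maximizer f /\ cd_max f = k) /\
  (forall f : 'M[R]_(n, m) -> Omega n m, affine_maximizer f -> (k <= cd_max f)%N).

From Pilot Require Import Defs.
From HB Require Import structures.
From mathcomp Require Import all_boot all_order all_algebra.
From mathcomp Require Import all_classical all_reals all_analysis.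
From mathcomp Require Import lra zify.
Set Implicit Arguments. Unset Strict Implicit. Unset Printing Implicit Defensive.
Import Order.TTheory GRing.Theory Num.Theory.
Import numFieldNormedType.Exports.
Local Open Scope classical_set_scope.
Local Open Scope ring_scope.

(* Upper bound: take unit weights and c_A = -|A_0|^2.  If two allocations A, B
   were optimal at the same type with |B_0| >= |A_0| + 2, moving an item of
   B_0 \ A_0 to A_0 would keep the total linear welfare of the pair but strictly
   decrease the total penalty, by strict convexity of k |-> k^2.  Optimality
   survives in the closure of the region of A, so all allocations of a face of
   the indifference complex have player-0 (hence player-1) bundle sizes within 1.
   Lower bound: on the types t e / w_0, where e has row 0 constantly 1 and row 1
   zero, an affine maximizer maximizes c_B + t |B_0|; so player 0 receives
   nothing for t << 0 and everything for t >> 0.  At the supremum of the first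
   set of times, the closures of the regions of an allocation with |A_0| = 0
   and of one with |B_0| >= 1 meet. *)

Lemma continuous_sum (T : topologicalType) (R : realType) (I : Type) (s : seq I)
  (F : I -> T -> R) : (forall i, continuous (F i)) ->
  continuous (fun x => \sum_(i <- s) F i x).
Proof. move=> HF; apply: continuous_big => [|i _]; [exact: add_continuous|exact: HF]. Qed.

Lemma closure_bigcup_finType (T : topologicalType) (I : finType) (P : I -> set T) :
  closure (\bigcup_i P i) `<=` \bigcup_i closure (P i).
Proof.
rewrite closureE; apply: smallest_sub; last first.
  by move=> x [i _ Pix]; exists i => //; exact: subset_closure.
by apply: closed_bigcup => [|i _]; [exact: finite_finset|exact: closed_closure].
Qed.

Lemma closure_image (T U : topologicalType) (phi : T -> U) (S : set T) :
  continuous phi -> phi @` closure S `<=` closure (phi @` S).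
Proof.
move=> cphi _ [x Sx <-].
have : closed (phi @^-1` closure (phi @` S)).
  by apply: preimage_closed => [y _|]; [exact: cphi|exact: closed_closure].
apply; apply: (closureS _ Sx) => t St; apply: subset_closure; by exists t.
Qed.

(* [Defs] writes the bundles as classical sets [[set j | _]] inside [#|_|]. *)
Lemma card_set_finset (T : finType) (b : pred T) :
  #|[set i | b i]| = #|[set i | b i]%SET|.
Proof. by apply: eq_card => x; rewrite !inE /in_set /=; apply/asboolP/idP. Qed.

Lemma sumr_bool_card (R : pzSemiRingType) (T : finType) (b : pred T) :
  \sum_(x : T) ((b x)%:R : R) = #|[set x | b x]%SET|%:R.
Proof.
rewrite -natr_sum -sum1_card; congr _%:R.
by rewrite [RHS]big_mkcond; apply: eq_bigr => x _; rewrite inE; case: (b x).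
Qed.

Section TwoPlayerAllocations.
Variable m : nat.
Implicit Types (A B : Omega 2 m) (S : {set 'I_m}).

Lemma allocmx1 A j : allocmx A 1 j = ~~ allocmx A 0 j.
Proof.
have /forallP/(_ j) := valP A; rewrite card_set_finset => /cards1P [x Hx].
have owner i : allocmx A i j = (i == x).
  by move/setP/(_ i): Hx; rewrite !inE.
by rewrite !owner; case: x {Hx owner} => [[|[|k]] Hk].
Qed.

Definition alloc_of S : Omega 2 m.
Proof.
refine (exist _ (\matrix_(i < 2, j < m) ((i == 0) == (j \in S))) _).
apply/forallP => j; rewrite card_set_finset; apply/cards1P.
exists (if j \in S then 0 else 1); apply/setP => i; rewrite !inE mxE.
by case: (j \in S); case: i => [[|[|k]] Hk].
Defined.

Lemma allocmx_alloc_of S j : allocmx (alloc_of S) 0 j = (j \in S).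
Proof. by rewrite /allocmx /= mxE. Qed.

Lemma bundle_sizeE A i : bundle_size A i = #|[set j | allocmx A i j]%SET|.
Proof. exact: card_set_finset. Qed.

Lemma bundle_size_alloc_of S : bundle_size (alloc_of S) 0 = #|S|.
Proof. by rewrite bundle_sizeE; apply: eq_card => j; rewrite inE allocmx_alloc_of. Qed.

Lemma bundle_size1 A : bundle_size A 1 = (m - bundle_size A 0%R)%N.
Proof.
rewrite !bundle_sizeE.
have -> : #|[set j | allocmx A 1 j]%SET| = #|~: [set j | allocmx A 0 j]%SET|.
  by apply: eq_card => j; rewrite !inE allocmx1.
have := cardsC [set j | allocmx A 0 j]%SET; rewrite card_ord; lia.
Qed.

Lemma bundle_size_le A i : (bundle_size A i <= m)%N.
Proof. by rewrite bundle_sizeE -[X in (_ <= X)%N](card_ord m) max_card. Qed.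

Lemma Cd_player1 A B : Cd A B 1 = Cd A B 0.
Proof.
rewrite /Cd !bundle_size1.
have := bundle_size_le A 0; have := bundle_size_le B 0; lia.
Qed.

End TwoPlayerAllocations.

Section AffineWelfare.
Variables (R : realType) (n m : nat).
Implicit Types (A B : Omega n m) (theta : 'M[R]_(n, m)).

Definition welfare (w : 'I_n -> R) (c : Omega n m -> R) theta B : R :=
  c B + \sum_(i < n) w i * bundle_value theta B i.

Definition welfare_argmax w c theta A : Prop :=
  forall B, welfare w c theta B <= welfare w c theta A.

Lemma continuous_bundle_value B i :
  continuous (fun theta : 'M[R]_(n, m) => bundle_value theta B i).
Proof.
apply: continuous_sum => j theta.
apply: (@continuous_comp _ _ _ (fun theta : 'M[R]_(n, m) => theta i j)
  ( *%R^~ ((allocmx B i j)%:R : R))).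
  exact: coord_continuous.
exact: mulrr_continuous.
Qed.

Lemma continuous_welfare w c B : continuous (welfare w c ^~ B).
Proof.
move=> theta; apply: continuousD; first exact: cst_continuous.
move: theta; apply: continuous_sum => i theta.
apply: (@continuous_comp _ _ _ (fun theta : 'M[R]_(n, m) => bundle_value theta B i)
  ( *%R (w i))).
  exact: continuous_bundle_value.
exact: mulrl_continuous.
Qed.

Lemma diff_set_argmax w c (f : 'M[R]_(n, m) -> Omega n m) A theta :
  (forall theta', welfare_argmax w c theta' (f theta')) ->
  diff_set f A theta -> welfare_argmax w c theta A.
Proof.
move=> f_argmax QA B.
have : closed [set theta | welfare w c theta B <= welfare w c theta A].
  have -> : [set theta | welfare w c theta B <= welfare w c theta A] =
      (fun theta => welfare w c theta A - welfare w c theta B) @^-1` [set y | 0 <= y].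
    by apply/seteqP; split => x /=; rewrite subr_ge0.
  apply: preimage_closed; last exact: closed_ge.
  move=> x _; apply: (@continuousB _ _ _ (welfare w c ^~ A) (welfare w c ^~ B));
  exact: continuous_welfare.
apply; apply: (closureS _ QA) => theta' /= <-; exact: f_argmax.
Qed.

Lemma leq_Cd_cd_max (f : 'M[R]_(n, m) -> Omega n m) F A B i :
  in_indiff f F -> A \in F -> B \in F -> (Cd A B i <= cd_max f)%N.
Proof.
move=> indF AF BF; rewrite /cd_max.
apply: (leq_trans _ (@leq_bigmax_cond _ (fun F => `[< in_indiff f F >]) _ F _)).
  apply: (leq_trans _ (leq_bigmax_cond _ AF)).
  apply: (leq_trans _ (leq_bigmax_cond _ BF)).
  exact: (@leq_bigmax_cond _ xpredT _ i).
exact/asboolP.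
Qed.

Lemma cd_max_leP (f : 'M[R]_(n, m) -> Omega n m) k :
  (forall F A B i, in_indiff f F -> A \in F -> B \in F -> (Cd A B i <= k)%N) ->
  (cd_max f <= k)%N.
Proof.
move=> Hk; apply/bigmax_leqP => F /asboolP indF.
apply/bigmax_leqP => A AF; apply/bigmax_leqP => B BF; apply/bigmax_leqP => i _.
exact: (Hk F A B i indF AF BF).
Qed.

End AffineWelfare.

Section StrictlyConvexMaximizer.
Variables (R : realType) (m : nat).
Implicit Types (A B X : Omega 2 m) (theta : 'M[R]_(2, m)).

Definition unit_weights : 'I_2 -> R := fun=> 1.

Definition size_penalty B : R := - (bundle_size B 0 ^ 2)%:R.

Definition convex_maximizer theta : Omega 2 m :=
  [arg max_(A > alloc_of [set: 'I_m]%SET) welfare unit_weights size_penalty theta A]%O.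

Lemma convex_maximizer_argmax theta :
  welfare_argmax unit_weights size_penalty theta (convex_maximizer theta).
Proof. by rewrite /convex_maximizer; case: arg_maxP => //= A _ Amax B; exact: Amax. Qed.

Lemma affine_maximizer_convex_maximizer : affine_maximizer convex_maximizer.
Proof.
exists unit_weights, size_penalty; split; first by move=> i; exact: oner_neq0.
exact: convex_maximizer_argmax.
Qed.

Lemma welfare_unit_weightsE c theta B : welfare unit_weights c theta B =
  c B + \sum_(j < m) (theta 0 j - theta 1 j) * (allocmx B 0 j)%:R
  + \sum_(j < m) theta 1 j.
Proof.
rewrite /welfare !big_ord_recr big_ord0 /= /unit_weights !mul1r add0r -addrA.
congr (_ + _); rewrite /bundle_value -!big_split /=; apply: eq_bigr => j _.
have -> : widen_ord (leqnSn 1) ord_max = 0 :> 'I_2 by apply: val_inj.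
have -> : ord_max = 1 :> 'I_2 by apply: val_inj.
by rewrite allocmx1; case: (allocmx B 0 j); rewrite /= ?mulr1 ?mulr0; lra.
Qed.

Lemma argmax_bundle_size_leS theta A B :
  welfare_argmax unit_weights size_penalty theta A ->
  welfare_argmax unit_weights size_penalty theta B ->
  (bundle_size B 0%R <= (bundle_size A 0%R).+1)%N.
Proof.
move=> Amax Bmax; rewrite leqNgt; apply/negP => ltAB.
set SA := [set j | allocmx A 0 j]%SET; set SB := [set j | allocmx B 0 j]%SET.
have [eA eB] : bundle_size A 0 = #|SA| /\ bundle_size B 0 = #|SB|.
  by split; exact: bundle_sizeE.
have /subsetPn [j0 j0B j0A] : ~~ (SB \subset SA).
  by apply/negP => /subset_leq_card; rewrite -eA -eB; lia.
have eA' : bundle_size (alloc_of (j0 |: SA)) 0 = (#|SA|).+1.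
  by rewrite bundle_size_alloc_of cardsU1 j0A.
have eB' : bundle_size (alloc_of (SB :\ j0)) 0 = (#|SB|).-1.
  by rewrite bundle_size_alloc_of (cardsD1 j0 SB) j0B.
have linear_part : forall v : 'I_m -> R,
    \sum_(j < m) v j * (allocmx (alloc_of (j0 |: SA)) 0 j)%:R
  + \sum_(j < m) v j * (allocmx (alloc_of (SB :\ j0)) 0 j)%:R
  = \sum_(j < m) v j * (allocmx A 0 j)%:R + \sum_(j < m) v j * (allocmx B 0 j)%:R.
  move=> v; rewrite -!big_split /=; apply: eq_bigr => j _.
  rewrite !allocmx_alloc_of !inE.
  have [->|//] := eqVneq j j0.
  by move: j0B j0A; rewrite !inE => -> /negbTE ->; rewrite /=; lra.
have := Amax (alloc_of (j0 |: SA)); have := Bmax (alloc_of (SB :\ j0)).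
rewrite !welfare_unit_weightsE.
have := linear_part (fun j => theta 0 j - theta 1 j) => /= lin le1 le2.
have : size_penalty (alloc_of (j0 |: SA)) + size_penalty (alloc_of (SB :\ j0))
  <= size_penalty A + size_penalty B by lra.
rewrite /size_penalty eA' eB' eA eB -!opprD lerN2 -!natrD ler_nat.
by move: ltAB; rewrite eA eB; nia.
Qed.

Lemma cd_max_convex_maximizer : (cd_max convex_maximizer <= 1)%N.
Proof.
apply: cd_max_leP => F A B i [theta QF] AF BF.
have argmax_in X : X \in F -> welfare_argmax unit_weights size_penalty theta X.
  by move=> XF; apply: diff_set_argmax (QF X XF); exact: convex_maximizer_argmax.
have leAB := argmax_bundle_size_leS (argmax_in A AF) (argmax_in B BF).
have leBA := argmax_bundle_size_leS (argmax_in B BF) (argmax_in A AF).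
have [-> | ->] : i = 0 \/ i = 1.
  by case: i => [[|[|k]] Hk] //; [left|right]; apply: val_inj.
- by rewrite /Cd; lia.
- by rewrite Cd_player1 /Cd; lia.
Qed.

End StrictlyConvexMaximizer.

Section ThresholdOnRay.
Variables (R : realType) (m : nat) (f : 'M[R]_(2, m) -> Omega 2 m).
Variables (w : 'I_2 -> R) (c : Omega 2 m -> R).
Hypothesis w0_neq0 : w 0 != 0.
Hypothesis f_argmax : forall theta, welfare_argmax w c theta (f theta).
Implicit Types (A B X : Omega 2 m) (t : R).

Definition ray_dir : 'M[R]_(2, m) := \matrix_(i, j) (if i == 0 then (w 0)^-1 else 0).

Definition ray t : 'M[R]_(2, m) := t *: ray_dir.

Lemma continuous_ray : continuous ray.
Proof. by move=> t; exact: scalel_continuous. Qed.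

Lemma welfare_ray t B : welfare w c (ray t) B = c B + t * (bundle_size B 0)%:R.
Proof.
rewrite /welfare !big_ord_recr big_ord0 /= add0r; congr (_ + _).
have -> : widen_ord (leqnSn 1) ord_max = 0 :> 'I_2 by apply: val_inj.
rewrite /bundle_value [X in _ + _ * X]big1 ?mulr0 ?addr0 => [|j _]; last first.
  by rewrite !mxE mulr0 mul0r.
rewrite bundle_sizeE -sumr_bool_card !mulr_sumr; apply: eq_bigr => j _.
by rewrite /ray !mxE /= mulrA mulrCA mulfV // mulr1.
Qed.

Definition ray_size t : nat := bundle_size (f (ray t)) 0.

Lemma ray_size_argmax t B :
  c B + t * (bundle_size B 0)%:R <= c (f (ray t)) + t * (ray_size t)%:R.
Proof. by rewrite -!welfare_ray; exact: f_argmax. Qed.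

Definition c_bound : R := \sum_X `|c X|.

Lemma c_bound_ge0 : 0 <= c_bound.
Proof. by apply: sumr_ge0 => X _; exact: normr_ge0. Qed.

Lemma c_sub_le X Y : c X - c Y <= 2 * c_bound.
Proof.
have le_bound Z : `|c Z| <= c_bound.
  by rewrite /c_bound (bigD1 Z) //= lerDl; apply: sumr_ge0 => ? _; exact: normr_ge0.
have := ler_norm (c X); have := ler_norm (- c Y); rewrite normrN.
have := le_bound X; have := le_bound Y; lra.
Qed.

Lemma ray_size_small t : t < - (2 * c_bound) -> ray_size t = 0%N.
Proof.
move=> small_t; apply/eqP; rewrite -leqn0 leqNgt; apply/negP => pos.
have := ray_size_argmax t (alloc_of finset.set0).
rewrite bundle_size_alloc_of cards0 mulr0 addr0.
have := c_sub_le (f (ray t)) (alloc_of finset.set0).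
have : 1 <= (ray_size t)%:R :> R by rewrite ler1n.
have := c_bound_ge0; nra.
Qed.

Lemma ray_size_large t : 2 * c_bound < t -> ray_size t = m.
Proof.
move=> large_t; apply/eqP; rewrite eqn_leq bundle_size_le /= leqNgt; apply/negP => lt_m.
have := ray_size_argmax t (alloc_of [set: 'I_m]%SET).
rewrite bundle_size_alloc_of cardsT card_ord.
have := c_sub_le (f (ray t)) (alloc_of [set: 'I_m]%SET).
have : (ray_size t)%:R + 1 <= m%:R :> R by rewrite natr1 ler_nat.
have := c_bound_ge0; nra.
Qed.

Lemma diff_set_ray_closure (S : set R) t : closure S t ->
  exists2 A, diff_set f A (ray t) & exists2 s, S s & f (ray s) = A.
Proof.
move=> St.
have /closure_bigcup_finType [A _ SAt] :
    closure (\bigcup_A [set s | S s /\ f (ray s) = A]) t.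
  by apply: closureS St => s Ss; exists (f (ray s)).
exists A; last by have [s [[Ss <-] _]] := SAt _ filterT; exists s.
apply: closureS (closure_image continuous_ray (ex_intro2 _ _ t SAt erefl)).
by move=> _ [s [_ <-] <-].
Qed.

Hypothesis m_gt0 : (0 < m)%N.

Lemma threshold_indifference : exists t A B,
  [/\ diff_set f A (ray t), diff_set f B (ray t),
      bundle_size A 0 = 0%N & (0 < bundle_size B 0%R)%N].
Proof.
set Z := [set t | ray_size t = 0%N].
have Z_t0 : Z (- (2 * c_bound) - 1) by apply: ray_size_small; lra.
have Z_ub : ubound Z (2 * c_bound).
  move=> t Zt; rewrite leNgt; apply/negP => large_t.
  by move: Zt m_gt0; rewrite /Z /= ray_size_large // => ->.
have Z_sup : has_sup Z by split; [exists (- (2 * c_bound) - 1)|exists (2 * c_bound)].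
exists (sup Z).
have [A QA [s Zs fsA]] : exists2 A, diff_set f A (ray (sup Z)) &
    exists2 s, Z s & f (ray s) = A.
  by apply: diff_set_ray_closure; case: Z_sup; exact: closure_sup.
have [B QB [s' lt_s' fs'B]] : exists2 B, diff_set f B (ray (sup Z)) &
    exists2 s', sup Z < s' & f (ray s') = B.
  by apply: diff_set_ray_closure; rewrite closure_gt /=.
exists A, B; split => //; first by rewrite -fsA.
rewrite -fs'B lt0n; apply/negP => /eqP Zs'.
by have := sup_upper_bound Z_sup Zs'; rewrite leNgt lt_s'.
Qed.

Lemma cd_max_ge1 : (1 <= cd_max f)%N.
Proof.
have [t [A [B [QA QB A0 B0]]]] := threshold_indifference.
have indAB : in_indiff f [set A; B]%SET.
  by exists (ray t) => X; rewrite !inE => /orP [] /eqP ->.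
apply: leq_trans (leq_Cd_cd_max 0 indAB (set21 A B) (set22 A B)).
by rewrite /Cd A0; lia.
Qed.

End ThresholdOnRay.

Lemma affine_maximizer_cd_max_ge1 (R : realType) (m : nat)
    (f : 'M[R]_(2, m) -> Omega 2 m) :
  (0 < m)%N -> affine_maximizer f -> (1 <= cd_max f)%N.
Proof.
by move=> m_gt0 [w [c [w_neq0 f_argmax]]]; exact: cd_max_ge1 (w_neq0 0) f_argmax m_gt0.
Qed.

Theorem mainTheorem9 (R : realType) (m : nat) (hm : (1 <= m)%N) :
  is_mu_c R 2 m 1.
Proof.
split; last by move=> f; exact: affine_maximizer_cd_max_ge1.
exists (@convex_maximizer R m); split; first exact: affine_maximizer_convex_maximizer.
apply/eqP; rewrite eqn_leq cd_max_convex_maximizer.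
exact: affine_maximizer_cd_max_ge1 (affine_maximizer_convex_maximizer R m).
Qed.
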